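(* Let $f(t)\neq 0$ be a Castelnuovo polynomial with $d=\deg f(t)>0$, and let $f^{\ast}(t)=f(t)-t^{d-1}-t^{d}$. If $f^{\ast}(t)$ is not a Castelnuovo polynomial, then \[f(t)=1+2t+3t^2+\dots+(u+1)t^u\] for some integer $u>0$.
   Context: $\mathbb{N}=\{0,1,2,\dots\}$. A function $s:\mathbb{Z}\to\mathbb{C}$ is identified with its generating function $\sum_n s(n)t^n$. A Castelnuovo function is a finitely supported function $s:\mathbb{N}\to\mathbb{N}$ such that for some integer $\sigma\ge 0$, $s(0)=1,s(1)=2,\dots,s(\sigma-1)=\sigma$ and $s(\sigma-1)\ge s(\sigma)\ge s(\sigma+1)\ge\dots\ge 0$ (with the convention $s(-1)=0$ when $\sigma=0$); a Castelnuovo polynomial is the generating function $\sum_n s(n)t^n$ of a Castelnuovo function. *)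

From HB Require Import structures.
From mathcomp Require Import all_boot all_order all_algebra.
Set Implicit Arguments. Unset Strict Implicit. Unset Printing Implicit Defensive.
Import Order.TTheory GRing.Theory Num.Theory.
Local Open Scope ring_scope.

(* A Castelnuovo function s : N -> N, encoded with values in int (so that the
   nonnegativity requirement "s : N -> N" is an explicit condition).
   Finite support is automatic for coefficient functions of polynomials. *)
Definition castelnuovo_fun (s : nat -> int) : Prop :=
  (forall n, 0 <= s n) /\
  exists sigma : nat,
    (forall i : nat, (i < sigma)%N -> s i = (i.+1)%:Z) /\
    (forall i : nat, (sigma <= i)%N ->
        s i <= (if i is j.+1 then s j else 0)).

Definition castelnuovo_poly (p : {poly int}) : Prop :=
  castelnuovo_fun (fun n => p`_n).

From HB Require Import structures.
From mathcomp Require Import all_boot all_order all_algebra.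
From mathcomp Require Import zify.
Import Order.TTheory GRing.Theory Num.Theory.
Local Open Scope ring_scope.

(* Let f have degree d = e + 1 and Castelnuovo witness sigma.  Its coefficient at
   t^(d+1) is 0, not d + 2, so sigma <= d + 1.  If sigma = d + 1 then f is
   1 + 2t + ... + (d+1)t^d.  Otherwise the coefficients of f are nonincreasing
   from index sigma <= d on, so subtracting 1 at indices e and d keeps them
   nonnegative and nonincreasing from min(sigma, e) on: f* is Castelnuovo. *)

Definition castelnuovo_with (s : nat -> int) (sigma : nat) : Prop :=
  (forall i : nat, (i < sigma)%N -> s i = (i.+1)%:Z) /\
  (forall i : nat, (sigma <= i)%N -> s i <= (if i is j.+1 then s j else 0)).

Definition dec_pair (s : nat -> int) (e : nat) (n : nat) : int :=
  s n - (n == e)%:R - (n == e.+1)%:R.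

Lemma eq_castelnuovo_fun {s t : nat -> int} :
  s =1 t -> castelnuovo_fun s -> castelnuovo_fun t.
Proof.
move=> eq_st [s_ge0 [sigma [s_low s_high]]]; split=> [n|]; first by rewrite -eq_st.
exists sigma; split=> [i /s_low|[|i] /s_high]; by rewrite -?eq_st.
Qed.

Section CastelnuovoWith.

Context {s : nat -> int} {sigma : nat}.
Hypothesis s_sigma : castelnuovo_with s sigma.

Lemma castelnuovo_with_zero_ge n : s n = 0 -> (sigma <= n)%N.
Proof. by case: s_sigma => s_low _ sn0; rewrite leqNgt; apply/negP => /s_low; rewrite sn0. Qed.

Lemma castelnuovo_with_pos_pred n : 0 < s n.+1 -> 0 < s n.
Proof.
case: s_sigma => s_low s_high sSn_gt0.
have [n_lt|n_ge] := ltnP n sigma; first by rewrite s_low.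
exact: lt_le_trans sSn_gt0 (s_high n.+1 (leqW n_ge)).
Qed.

End CastelnuovoWith.

Section DecPair.

Context {s : nat -> int} {e sigma : nat}.
Hypotheses (s_ge0 : forall n, 0 <= s n) (s_sigma : castelnuovo_with s sigma).
Hypotheses (s_top : 0 < s e.+1) (s_vanish : forall n, (e.+1 < n)%N -> s n = 0).
Hypothesis sigma_le : (sigma <= e.+1)%N.

Lemma dec_pair_ge0 n : 0 <= dec_pair s e n.
Proof.
have s_e := castelnuovo_with_pos_pred s_sigma _ s_top.
have := s_ge0 n; rewrite /dec_pair.
have [->|_] := eqVneq n e; first lia.
have [->|_] := eqVneq n e.+1; lia.
Qed.

Lemma dec_pair_with : castelnuovo_with (dec_pair s e) (minn sigma e).
Proof.
case: s_sigma => s_low s_high; rewrite /dec_pair.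
split=> [i i_lt|[|j] j_ge /=]; first by rewrite s_low; lia.
  have [sigma0|sigma_gt0] := posnP sigma; first by have /= := s_high 0%N; lia.
  by have := s_low 0%N sigma_gt0; lia.
have [j_lt_e|j_ge_e] := ltnP j.+1 e; first by have /= := s_high j.+1; lia.
case: (ltngtP j.+1 e.+2) => j_cmp.
- have [sigma_le_j|sigma_gt_j] := leqP sigma j.+1; first by have /= := s_high j.+1; lia.
  by have := s_low j; have := s_low j.+1; lia.
- by rewrite !s_vanish; lia.
- by move: j_cmp => [->]; rewrite s_vanish //; lia.
Qed.

Lemma castelnuovo_dec_pair : castelnuovo_fun (dec_pair s e).
Proof. by split; [exact: dec_pair_ge0 | exists (minn sigma e); exact: dec_pair_with]. Qed.

End DecPair.

Lemma poly_coefs_eq_sum {R : nzSemiRingType} (p : {poly R}) (a : nat -> R) n :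
  (size p <= n)%N -> (forall i, (i < n)%N -> p`_i = a i) ->
  p = \sum_(i < n) a i *: 'X^i.
Proof.
move=> size_p p_a; rewrite -poly_def; apply/polyP => i; rewrite coef_poly.
by case: ltnP => [/p_a|i_ge]; last exact/nth_default/(leq_trans size_p).
Qed.

Theorem lemma3 (f : {poly int}) :
  f != 0 -> castelnuovo_poly f ->
  (0 < (size f).-1)%N ->
  ~ castelnuovo_poly (f - 'X^((size f).-1 - 1) - 'X^((size f).-1)) ->
  exists u : nat, (0 < u)%N /\
    f = \sum_(i < u.+1) (i.+1)%:R *: 'X^i.
Proof.
move=> f_neq0 [f_ge0 [sigma f_sigma]] d_gt0 not_star.
have [e size_f] : exists e, size f = e.+2 by case: (size f) d_gt0 => [|[|e]] //; exists e.
rewrite size_f /= subn1 /= in not_star.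
have f_vanish n : (e.+1 < n)%N -> f`_n = 0 by move=> n_gt; apply: nth_default; rewrite size_f.
have f_top : 0 < f`_e.+1.
  have lead_f : lead_coef f = f`_e.+1 by rewrite lead_coefE size_f.
  by rewrite lt_def f_ge0 andbT -lead_f lead_coef_eq0.
have := castelnuovo_with_zero_ge f_sigma _ (f_vanish e.+2 (ltnSn _)).
rewrite leq_eqVlt ltnS => /orP[/eqP sigma_eq|sigma_le].
  exists e.+1; split=> //; apply: (poly_coefs_eq_sum _ (fun i => (i.+1)%:R)); first by rewrite size_f.
  by case: f_sigma => f_low _ i; rewrite -sigma_eq => /f_low ->; rewrite natz.
exfalso; apply: not_star.
apply: (eq_castelnuovo_fun _ (castelnuovo_dec_pair f_ge0 f_sigma f_top f_vanish sigma_le)) => n.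
by rewrite !coefB !coefXn.
Qed.
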